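(* Let $p=p_n\in(0,1)$ with $f_n:=n p_n\to 0$, and let $G\sim\mathcal{G}(n,p_n)$ with $m$ its number of edges. Let $\phi(\delta)=(1+\delta)\ln(1+\delta)-\delta$, $\delta_n=\phi^{-1}(2\ln 2/f_n)$ and $C_n=\left(1+(1+\delta_n)\frac{n-1}{n}f_n\right)^{-1}$. For $1\le u\le n$ define $$w_n(u)=\sum_{i=n-u}^{n}\binom{i}{i-(n-u)}(1-p_n)^{\binom{i-(n-u)}{2}}\,\mathbb{P}\left(m\ge\frac{n^2}{2u}-\frac{n}{2}\right),$$ and $\mathbb{T}^2(n,p)=\sum_{nC_n\le u\le n}w_n(u)$. Then $\mathbb{T}^2(n,p)$ has subexponential growth in $n$. Furthermore, there exist a constant $h>0$ and a sequence $\gamma_n$ of at most polynomial growth such that $$\mathbb{T}^2(n,p)\le\gamma_n\exp\left(h\cdot n\cdot\left(\ln\frac{1}{f_n}\right)^{-1}\ln\left(\ln\frac{1}{f_n}\right)\right).$$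
   Context: $\mathcal{G}(n,p)$ is the binomial random graph on $n$ vertices in which each of the $\binom{n}{2}$ pairs of vertices is an edge with probability $p$, independently. $\phi$ is increasing on $[0,\infty)$, so $\phi^{-1}$ is well defined. The quantity $w_n(u)$ is the paper's bound on the expected number of nodes with potential $u$ in the best-first branch-and-bound search tree for maximum independent set (potential of a partial solution $S\subseteq\{v_1,\dots,v_i\}$ being $|S|+n-i$). *)

From HB Require Import structures.
From mathcomp Require Import all_boot all_order all_algebra.
From mathcomp Require Import all_classical all_reals all_analysis.
Set Implicit Arguments. Unset Strict Implicit. Unset Printing Implicit Defensive.
Import Order.TTheory GRing.Theory Num.Theory.
Import numFieldNormedType.Exports.
Local Open Scope classical_set_scope.
Local Open Scope ring_scope.

Definition phi {R : realType} (d : R) : R := (1 + d) * ln (1 + d) - d.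

(* phi^{-1} on [0,oo): phi is continuous, increasing, phi 0 = 0, unbounded,
   so the supremum below is the unique d >= 0 with phi d = y (for y >= 0). *)
Definition phi_inv {R : realType} (y : R) : R :=
  sup [set d : R | 0 <= d /\ phi d <= y].

(* potential edges of a graph on vertex set 'I_n *)
Definition pairs (n : nat) : {set 'I_n * 'I_n} := [set e : 'I_n * 'I_n | (nat_of_ord e.1 < nat_of_ord e.2)%N].

(* P(m >= t) where m = number of edges of G ~ G(n,q): sum over all edge sets *)
Definition prob_edges_ge {R : realType} (n : nat) (q : R) (t : R) : R :=
  \sum_(E : {set 'I_n * 'I_n} | (E \subset pairs n) && (t <= (#|E|)%:R))
     q ^+ #|E| * (1 - q) ^+ (#|pairs n| - #|E|).

Section Defs.
Variable R : realType.
Variable p : nat -> R.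

Definition f_seq (n : nat) : R := n%:R * p n.
Definition delta_seq (n : nat) : R := phi_inv (2 * ln 2 / f_seq n).
Definition C_seq (n : nat) : R :=
  (1 + (1 + delta_seq n) * ((n.-1)%:R / n%:R) * f_seq n)^-1.

Definition w_seq (n u : nat) : R :=
  \sum_(n - u <= i < n.+1)
     ('C(i, i - (n - u)))%:R * (1 - p n) ^+ 'C(i - (n - u), 2)
       * prob_edges_ge n (p n) ((n%:R ^+ 2) / (2 * u%:R) - n%:R / 2).

Definition T2 (n : nat) : R :=
  \sum_(1 <= u < n.+1 | n%:R * C_seq n <= u%:R) w_seq n u.
End Defs.

(* Write [L = ln (1 / f_n)]. Since [phi^-1 y = O (y / ln y)], the threshold
   [C_n] satisfies [1 - C_n = O (1 / L)], so every [u] in the sum has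
   [n - u = O (n / L)]. Bounding the probability and the [(1 - p)] factors by
   [1], each [w_n u] is at most [(n + 1) binomial(n, n - u)], and
   [binomial(n, k) <= (1 + 1/L)^n L^k <= exp (n / L + k ln L)]. Summing over
   the [n] values of [u] gives [T2 <= n (n + 1) exp (h n ln L / L)]; as
   [ln L / L -> 0], the exponent is [o(n)]. *)

From HB Require Import structures.
From mathcomp Require Import all_boot all_order all_algebra.
From mathcomp Require Import all_classical all_reals all_analysis.
From mathcomp Require Import ring lra zify.
Import Order.TTheory GRing.Theory Num.Theory.
Import numFieldNormedType.Exports.
Local Open Scope classical_set_scope.
Local Open Scope ring_scope.

Set Implicit Arguments.
Unset Strict Implicit.
Unset Printing Implicit Defensive.

Section ProbEdges.
Variable R : realType.

Lemma prob_edges_ge_ge0 n (q t : R) : 0 <= q <= 1 -> 0 <= prob_edges_ge n q t.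
Proof.
move=> /andP[q0 q1]; apply: sumr_ge0 => E _; apply: mulr_ge0; apply: exprn_ge0; lra.
Qed.

(* The full sum over edge sets is the expansion of the product over all
   vertex pairs of [q + (1 - q)] = 1. *)
Lemma prob_edges_ge_le1 n (q t : R) : 0 <= q <= 1 -> prob_edges_ge n q t <= 1.
Proof.
move=> /andP[q0 q1].
pose F (e : 'I_n * 'I_n) : R := if e \in pairs n then q else 0.
pose G (e : 'I_n * 'I_n) : R := if e \in pairs n then 1 - q else 1.
pose weight (E : {set 'I_n * 'I_n}) := \prod_e (if e \in E then F e else G e).
have weight_ge0 E : 0 <= weight E.
  by apply: prodr_ge0 => e _; rewrite /F /G; case: ifP => _; case: ifP => _ //; lra.
have weight_sum : \sum_(E : {set 'I_n * 'I_n}) weight E = 1.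
  have prod1 : \prod_e (F e + G e) = 1.
    by apply: big1 => e _; rewrite /F /G; case: ifP => _; rewrite ?add0r // addrC subrK.
  by rewrite -prod1 bigA_distr; apply: eq_bigl.
have weightE (E : {set 'I_n * 'I_n}) : E \subset pairs n ->
    weight E = q ^+ #|E| * (1 - q) ^+ (#|pairs n| - #|E|).
  move=> sE; rewrite /weight (bigID (mem E)) /=; congr (_ * _).
    rewrite -prodr_const; apply: eq_big => // e /= eE.
    by rewrite eE /F (fintype.subsetP sE _ eE).
  rewrite (bigID (mem (pairs n))) /= [X in _ * X]big1 ?mulr1; last first.
    by move=> e /andP[/negbTE -> /negbTE]; rewrite /G => ->.
  rewrite -(cardsDS sE) -prodr_const; apply: eq_big => [e|e /andP[/negbTE -> ep]].
    by rewrite !inE andbC.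
  by rewrite /G ep.
rewrite -weight_sum /prob_edges_ge big_mkcond /=; apply: ler_sum => E _.
by case: ifP => [/andP[/weightE -> _] //|_]; exact: weight_ge0.
Qed.

End ProbEdges.

Section Estimates.
Variable R : realType.

Lemma w_seq_le (p : nat -> R) n u : 0 < p n < 1 -> (u <= n)%N ->
  w_seq p n u <= n.+1%:R * 'C(n, n - u)%:R.
Proof.
move=> /andP[p0 p1] un; rewrite /w_seq.
set P := prob_edges_ge _ _ _.
have /andP[P0 P1] : 0 <= P <= 1.
  by rewrite prob_edges_ge_ge0 ?prob_edges_ge_le1 //; apply/andP; split; lra.
apply: (@le_trans _ _ (\sum_(n - u <= i < n.+1) 'C(n, n - u)%:R)); last first.
  rewrite sumr_const_nat -mulrnA -natrM ler_nat mulnC.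
  by apply: leq_mul => //; exact: leq_subr.
apply: ler_sum_nat => i /andP[ui iln].
have bin_le : 'C(i, i - (n - u))%:R <= 'C(n, n - u)%:R :> R.
  by rewrite ler_nat bin_sub //; apply: leq_bin2l; rewrite -ltnS.
have /andP[e0 e1] : 0 <= (1 - p n) ^+ 'C(i - (n - u), 2) <= 1.
  by rewrite exprn_ge0 ?exprn_ile1 //; lra.
apply: le_trans bin_le; apply: (le_trans (ler_piMr _ P1)); first exact: mulr_ge0.
exact: ler_piMr.
Qed.

Lemma bin_mulX_le_expD1 n k (x : R) : 0 <= x -> 'C(n, k)%:R * x ^+ k <= (1 + x) ^+ n.
Proof.
move=> x0; have [kn|nk] := leqP k n; last first.
  by rewrite bin_small // mul0r exprn_ge0 // addr_ge0.
rewrite addrC exprD1n (bigD1 (Ordinal (kn : (k < n.+1)%N))) //= mulr_natl lerDl.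
by apply: sumr_ge0 => i _; apply: mulrn_wge0; apply: exprn_ge0.
Qed.

(* Take [x = 1/L] above: [(1 + 1/L)^n <= e^(n/L)] and [L^k = e^(k ln L)]. *)
Lemma bin_le_expR n k (L K : R) : 1 <= L -> k%:R <= K ->
  'C(n, k)%:R <= expR (n%:R / L + K * ln L).
Proof.
move=> L1 kK; have L0 : 0 < L by lra.
have iL0 : 0 <= L^-1 by rewrite invr_ge0; lra.
have Lk0 : 0 < L ^+ k by apply: exprn_gt0.
have bin_le : 'C(n, k)%:R <= (1 + L^-1) ^+ n * L ^+ k.
  rewrite -[X in X <= _](divfK (lt0r_neq0 Lk0)) -exprVn ler_pM2r //.
  exact: bin_mulX_le_expD1.
have pow1D_le : (1 + L^-1) ^+ n <= expR (n%:R / L).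
  rewrite mulrC expRM_natr; apply: lerXn2r; rewrite ?nnegrE ?expR_ge0 ?expR_ge1Dx //.
  exact: addr_ge0.
have powL_le : L ^+ k <= expR (K * ln L).
  rewrite -{1}(lnK (x := L)) ?posrE // -expRM_natl ler_expR ler_wpM2r //.
  exact: ln_ge0.
rewrite expRD; apply: (le_trans bin_le); apply: ler_pM => //; last exact: ltW.
exact/exprn_ge0/addr_ge0.
Qed.

Lemma ln_le_subr1 (x : R) : 0 < x -> ln x <= x - 1.
Proof.
move=> x0; have := @le_ln1Dx R (x - 1); rewrite addrCA subrr addr0; apply; lra.
Qed.

Lemma ln_le_affine (a x : R) : 0 < a -> 0 < x -> ln x <= a * x - 1 - ln a.
Proof.
move=> a0 x0; have := ln_le_subr1 (mulr_gt0 a0 x0).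
by rewrite lnM ?posrE //; lra.
Qed.

Lemma ln2_le1 : ln (2 : R) <= 1.
Proof. by have := @ln_le_subr1 2; lra. Qed.

Lemma ln_inv_ge (f M : R) : 0 < f -> f <= expR (- M) -> M <= ln f^-1.
Proof.
move=> f0 fM; rewrite lnV ?posrE // lerNr -[X in _ <= X]expRK ler_ln ?posrE //.
exact: expR_gt0.
Qed.

Lemma mul_ln_inv_le1 (f : R) : 0 < f -> f * ln f^-1 <= 1.
Proof.
move=> f0; have lnf : ln f^-1 <= f^-1 - 1 by rewrite ln_le_subr1 ?invr_gt0.
have := ler_wpM2l (ltW f0) lnf; rewrite mulrBr mulfV ?gt_eqF //; lra.
Qed.

(* [phi d >= d (ln (1 + d) - 1)], and beyond the bound
   [ln (1 + d) - 1 >= ln (1 / f) / 2], so [phi d] would exceed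
   [e / f >= 2 ln 2 / f]. *)
Lemma phi_inv_le (f : R) : 0 < f -> f < 1 ->
  0 <= phi_inv (2 * ln 2 / f) <= 2 * expR 1 / (f * ln f^-1).
Proof.
move=> f0 f1.
have L0 : 0 < ln f^-1 by apply: ln_gt0; rewrite invf_gt1.
set L := ln f^-1 in L0 *; set y := 2 * ln 2 / f; set D := 2 * expR 1 / (f * L).
have ln2_ge0 : 0 <= ln (2 : R) by apply: ln_ge0; lra.
have D0 : 0 < D by rewrite /D divr_gt0 ?mulr_gt0 ?expR_gt0.
have lnD_ge : 1 + L / 2 <= ln D.
  have -> : ln D = ln 2 + 1 + L - ln L.
    rewrite /D invfM !lnM ?posrE ?mulr_gt0 ?invr_gt0 ?expR_gt0 //.
    by rewrite expRK -/L lnV ?posrE // addrA.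
  have half0 : 0 < 2^-1 :> R by rewrite invr_gt0.
  by have := ln_le_affine half0 L0; rewrite lnV ?posrE //; lra.
have ub d : [set d : R | 0 <= d /\ phi d <= y] d -> d <= D.
  move=> [d0 phid]; rewrite leNgt; apply/negP => Dd.
  have ln1d : ln D <= ln (1 + d) by rewrite ler_ln ?posrE; lra.
  have phid_ge : d * (L / 2) <= phi d by rewrite /phi; nra.
  have DL : D * (L / 2) = expR 1 / f by rewrite /D; field; rewrite !gt_eqF.
  have y_le : y <= expR 1 / f.
    by rewrite /y ler_pM2r ?invr_gt0 //; have := ln2_le1; have := @expR_ge1Dx R 1; lra.
  have : D * (L / 2) < d * (L / 2) by rewrite ltr_pM2r // divr_gt0.
  lra.
have phi_set0 : [set d : R | 0 <= d /\ phi d <= y] 0.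
  by split => //; rewrite /phi addr0 ln1 mulr0 subr0 /y divr_ge0 ?mulr_ge0 // ltW.
apply/andP; split; first by apply: (ub_le_sup _ phi_set0); exists D.
by apply: ge_sup; [exists 0 | exact: ub].
Qed.

End Estimates.

Section T2Bound.
Variables (R : realType) (p : nat -> R).
Hypothesis p_prob : forall n, 0 < p n < 1.

Lemma f_seq_gt0 n : (0 < n)%N -> 0 < f_seq p n.
Proof. by move=> n0; have /andP[p0 _] := p_prob n; rewrite mulr_gt0 ?ltr0n. Qed.

Lemma one_sub_C_seq_le n : (0 < n)%N -> f_seq p n <= expR (- expR 1) ->
  1 - C_seq p n <= (1 + 2 * expR 1) / ln (f_seq p n)^-1.
Proof.
move=> n0 f_small; have f0 := f_seq_gt0 n0.
have f1 : f_seq p n < 1 by apply: le_lt_trans f_small _; rewrite expR_lt1 oppr_lt0 expR_gt0.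
have /andP[d0 d_le] := phi_inv_le f0 f1.
have fL_le1 := mul_ln_inv_le1 f0.
have L0 : 0 < ln (f_seq p n)^-1.
  by apply: lt_le_trans (ln_inv_ge f0 f_small); exact: expR_gt0.
rewrite /C_seq -/(delta_seq p n) in d0 d_le *.
set f := f_seq p n in f0 f1 fL_le1 L0 d0 d_le *.
set L := ln f^-1 in fL_le1 L0 d_le *; set d := delta_seq p n in d0 d_le *.
set r := (n.-1)%:R / n%:R.
have /andP[r0 r1] : 0 <= r <= 1.
  by rewrite divr_ge0 //= ler_pdivrMr ?ltr0n // mul1r ler_nat leq_pred.
set A := (1 + d) * r * f.
have A0 : 0 <= A by apply: mulr_ge0; [apply: mulr_ge0 => //; lra | exact: ltW].
have A_le : A <= (1 + 2 * expR 1) / L.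
  have df_le : d * f <= 2 * expR 1 / L.
    have := ler_wpM2r (ltW f0) d_le; congr (_ <= _); field.
    by rewrite !gt_eqF.
  have f_le : f <= L^-1 by rewrite -[L^-1]mul1r ler_pdivlMr.
  have : A <= (1 + d) * f by rewrite /A ler_wpM2r ?(ltW f0) // ler_piMr //; lra.
  rewrite mulrDl; lra.
have : (1 + A)^-1 * (1 + A) = 1 by rewrite mulVf // gt_eqF //; lra.
have : 0 < (1 + A)^-1 by rewrite invr_gt0; lra.
nra.
Qed.

Lemma w_seq_le_expR n u : (0 < n)%N -> f_seq p n <= expR (- expR 1) ->
  n%:R * C_seq p n <= u%:R -> (u <= n)%N ->
  w_seq p n u <= n.+1%:R * expR ((2 + 2 * expR 1) * n%:R *
    (ln (f_seq p n)^-1)^-1 * ln (ln (f_seq p n)^-1)).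
Proof.
move=> n0 f_small Cu un.
apply: le_trans (w_seq_le (p_prob n) un) _; rewrite ler_wpM2l //.
have C_le := one_sub_C_seq_le n0 f_small.
have e_le := ln_inv_ge (f_seq_gt0 n0) f_small.
set L := ln (f_seq p n)^-1 in C_le e_le *.
have L1 : 1 <= L by have := @expR_ge1Dx R 1; lra.
have lnL1 : 1 <= ln L.
  by rewrite -[X in X <= _](expRK 1) ler_ln ?posrE ?expR_gt0 //; lra.
set c := 1 + 2 * expR 1 in C_le.
have nL0 : 0 <= n%:R / L by rewrite divr_ge0 //; lra.
apply: (le_trans (bin_le_expR n (K := n%:R / L * c) L1 _)).
  rewrite natrB // -mulrA mulrC.
  have : n%:R * (1 - C_seq p n) <= n%:R * (c / L) by rewrite ler_wpM2l.
  lra.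
rewrite ler_expR -/c (_ : 2 + 2 * expR 1 = 1 + c); last by rewrite /c; ring.
have : n%:R / L <= n%:R / L * ln L by rewrite ler_peMr.
rewrite -!mulrA -!(mulrCA n%:R) -!/(n%:R / L); nra.
Qed.

Lemma T2_le n : (0 < n)%N -> f_seq p n <= expR (- expR 1) ->
  T2 p n <= (n * n.+1)%:R * expR ((2 + 2 * expR 1) * n%:R *
    (ln (f_seq p n)^-1)^-1 * ln (ln (f_seq p n)^-1)).
Proof.
move=> n0 f_small; set E := expR _.
apply: (@le_trans _ _ (\sum_(1 <= u < n.+1) n.+1%:R * E)); last first.
  by rewrite sumr_const_nat subSS subn0 natrM -mulrA [X in _ <= X]mulr_natl.
rewrite /T2 big_mkcond /=; apply: ler_sum_nat => u /andP[_ un].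
case: ifP => [Cu|_]; first exact: w_seq_le_expR.
by rewrite mulr_ge0 ?expR_ge0.
Qed.

End T2Bound.

Lemma natr_mulS_le (R : realType) n : (0 < n)%N -> (n * n.+1)%:R <= 2 * n%:R ^+ 2 :> R.
Proof. by move=> n0; rewrite -natrX -natrM ler_nat expnS expn1; nia. Qed.

Lemma poly_le_expR_near (R : realType) (c eps : R) k : 0 < eps ->
  \forall n \near \oo, c * n%:R ^+ k <= expR (eps * n%:R).
Proof.
move=> eps0; near=> n.
have n_ge : c * k.+1`!%:R / eps ^+ k.+1 <= n%:R by near: n; exact: nbhs_infty_ger.
have en0 : 0 <= eps * n%:R by rewrite mulr_ge0 // ltW.
apply: le_trans (expR_ge1Dxn k en0).
have c_le : c <= eps ^+ k.+1 * n%:R / k.+1`!%:R.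
  rewrite ler_pdivlMr ?ltr0n ?fact_gt0 //.
  by move: n_ge; rewrite ler_pdivrMr ?exprn_gt0 //; lra.
have : c * n%:R ^+ k <= eps ^+ k.+1 * n%:R / k.+1`!%:R * n%:R ^+ k.
  by rewrite ler_wpM2r ?exprn_ge0.
have -> : (eps * n%:R) ^+ k.+1 / k.+1`!%:R = eps ^+ k.+1 * n%:R / k.+1`!%:R * n%:R ^+ k.
  by rewrite exprMn [n%:R ^+ k.+1]exprS; ring.
lra.
Unshelve. all: end_near.
Qed.

Section Asymptotics.
Variables (R : realType) (p : nat -> R).
Hypothesis p_prob : forall n, 0 < p n < 1.
Hypothesis f_seq_cvg0 : f_seq p @ \oo --> (0 : R).

Lemma f_seq_le_near (b : R) : 0 < b -> \forall n \near \oo, f_seq p n <= b.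
Proof. exact: (cvgr_le _ f_seq_cvg0). Qed.

(* [ln L <= a L / 2 - 1 - ln (a / 2)] by [ln_le_affine], and this is at most
   [a L] once [L] is large. *)
Lemma ln_ln_inv_f_seq_le_near (a : R) : 0 < a ->
  \forall n \near \oo, 0 < ln (f_seq p n)^-1 /\
    ln (ln (f_seq p n)^-1) <= a * ln (f_seq p n)^-1.
Proof.
move=> a0; have a20 : 0 < a / 2 by rewrite divr_gt0.
pose M := Num.max 1 ((-1 - ln (a / 2)) / (a / 2)).
near=> n.
have L_ge : M <= ln (f_seq p n)^-1.
  apply: ln_inv_ge; last by near: n; apply: f_seq_le_near; exact: expR_gt0.
  by apply: f_seq_gt0 => //; near: n; exact: nbhs_infty_gt.
set L := ln (f_seq p n)^-1 in L_ge *.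
have [L1 LM0] : 1 <= L /\ (-1 - ln (a / 2)) / (a / 2) <= L by move: L_ge; rewrite ge_max => /andP.
have L0 : 0 < L by lra.
split => //; have := ln_le_affine a20 L0.
have : -1 - ln (a / 2) <= a / 2 * L by rewrite [a / 2 * L]mulrC -ler_pdivrMr.
lra.
Unshelve. all: end_near.
Qed.

Lemma T2_exponent_le_near (h eps : R) : 0 < h -> 0 < eps ->
  \forall n \near \oo, h * n%:R * (ln (f_seq p n)^-1)^-1 * ln (ln (f_seq p n)^-1)
    <= eps * n%:R.
Proof.
move=> h0 eps0; near=> n.
have [L0 lnL_le] : 0 < ln (f_seq p n)^-1 /\
    ln (ln (f_seq p n)^-1) <= eps / h * ln (f_seq p n)^-1.
  by near: n; apply: ln_ln_inv_f_seq_le_near; rewrite divr_gt0.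
set L := ln (f_seq p n)^-1 in L0 lnL_le *.
have hnL0 : 0 <= h * n%:R * L^-1 by rewrite !mulr_ge0 ?invr_ge0 // ltW.
have -> : eps * n%:R = h * n%:R * L^-1 * (eps / h * L).
  by field; rewrite !gt_eqF.
exact: ler_wpM2l.
Unshelve. all: end_near.
Qed.

End Asymptotics.

Unset Implicit Arguments.

Theorem proposition3 (R : realType) (p : nat -> R)
  (hp : forall n, 0 < p n < 1)
  (hf : f_seq p @ \oo --> (0 : R)) :
  (forall eps : R, 0 < eps ->
     \forall n \near \oo, T2 p n <= expR (eps * n%:R))
  /\
  (exists h : R, 0 < h /\
   exists gamma : nat -> R,
     (exists (c : R) (k : nat), forall n, (0 < n)%N -> gamma n <= c * n%:R ^+ k) /\
     \forall n \near \oo,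
       T2 p n <= gamma n *
         expR (h * n%:R * (ln (f_seq p n)^-1)^-1 * ln (ln (f_seq p n)^-1))).
Proof.
pose h : R := 2 + 2 * expR 1.
have h0 : 0 < h by rewrite addr_gt0 // mulr_gt0 // expR_gt0.
have T2_le_near : \forall n \near \oo, T2 p n <= (n * n.+1)%:R *
    expR (h * n%:R * (ln (f_seq p n)^-1)^-1 * ln (ln (f_seq p n)^-1)).
  near=> n; apply: T2_le => //; first by near: n; exact: nbhs_infty_gt.
  by near: n; apply: f_seq_le_near => //; exact: expR_gt0.
split=> [eps eps0|]; last first.
  exists h; split=> //; exists (fun n => (n * n.+1)%:R); split=> //.
  by exists 2, 2%N => n; exact: natr_mulS_le.
have eps20 : 0 < eps / 2 by rewrite divr_gt0.
near=> n.
rewrite (_ : eps * n%:R = eps / 2 * n%:R + eps / 2 * n%:R); last by field.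
rewrite expRD; apply: le_trans; first exact: (near T2_le_near n).
apply: ler_pM; rewrite ?expR_ge0 // ?ler_expR.
  apply: le_trans (natr_mulS_le R _) _; first by near: n; exact: nbhs_infty_gt.
  by near: n; exact: (poly_le_expR_near 2 2 eps20).
by near: n; exact: (T2_exponent_le_near hp hf h0 eps20).
Unshelve. all: end_near.
Qed.
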